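(* For $m\ge1$, let $\mathbf{B}_m$ be the $m\times m$ symmetric tridiagonal matrix with diagonal entries $b_{kk}=4k^2-6k+3$ ($1\le k\le m$) and off-diagonal entries $b_{k,k+1}=b_{k+1,k}=-k(2k-1)$ ($1\le k\le m-1$), all other entries zero, and let $\mathbf{D}_m=\mathbf{B}_m-\frac12\mathbf{E}_m$ with $\mathbf{E}_m$ the identity matrix. Then for every $m\in\mathbb{N}$, $$\lambda_{\min}(\mathbf{B}_m)=\tfrac12+\lambda_{\min}(\mathbf{D}_m)>\tfrac12,$$ where $\lambda_{\min}$ denotes the smallest eigenvalue. *)

From mathcomp Require Import all_boot all_order all_algebra.
Set Implicit Arguments. Unset Strict Implicit. Unset Printing Implicit Defensive.
Import Order.TTheory GRing.Theory Num.Theory.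
Local Open Scope ring_scope.

(* B_m : 1-based index k corresponds to the ordinal i with val i = k - 1. *)
Definition Bmat (R : rcfType) (m : nat) : 'M[R]_m :=
  \matrix_(i < m, j < m)
    (let k : R := (i.+1)%:R in
     let l : R := (j.+1)%:R in
     if (i == j :> nat) then 4 * k ^+ 2 - 6 * k + 3
     else if (j == i.+1 :> nat) then - (k * (2 * k - 1))
     else if (i == j.+1 :> nat) then - (l * (2 * l - 1))
     else 0).

Definition Dmat (R : rcfType) (m : nat) : 'M[R]_m :=
  Bmat R m - (2%:R^-1)%:M.

Definition is_min_eigenvalue (R : rcfType) (m : nat) (A : 'M[R]_m) (l : R) :=
  eigenvalue A l /\ (forall a, eigenvalue A a -> l <= a).

(* B_m is real symmetric, so its complexification is Hermitian and all its
   eigenvalues are real: B_m has eigenvalues, finitely many, hence a smallest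
   one, and D_m = B_m - 1/2 E_m has the same spectrum shifted by -1/2.
   The bound comes from writing the quadratic form of B_m as a sum of squares
   (0-based indices, x_m = 0):
     2 x B_m x^T = sum_k x_k^2 + sum_k ((2k+1) x_k - (2k+2) x_(k+1))^2,
   whose second sum vanishes only when x_k = (2k+2)/(2k+1) x_(k+1) for all k,
   i.e. only for x = 0. For an eigenpair this gives (2 lambda - 1) |x|^2 > 0. *)

From mathcomp Require Import all_boot all_order all_algebra.
From mathcomp Require Import polyrcf complex.
From mathcomp Require Import ring lra zify.
Set Implicit Arguments. Unset Strict Implicit. Unset Printing Implicit Defensive.
Import Order.TTheory GRing.Theory Num.Theory.
Local Open Scope ring_scope.

Lemma hermitian_eigenvalue_real (C : numClosedFieldType) n (A : 'M[C]_n) z :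
  map_mx Num.conj A^T = A -> eigenvalue A z -> z \is Num.real.
Proof.
move=> hA /eigenvalueP [v hv v_neq0].
pose vv := v *m map_mx Num.conj v^T.
have vv_gt0 : 0 < vv 0 0 by rewrite /vv -dotmxE dotmx_is_dotmx.
have : z *: vv = z^* *: vv.
  rewrite /vv scalemxAl -hv -mulmxA -hA -map_mxM -trmx_mul hv.
  by rewrite linearZ /= map_mxZ -scalemxAr.
move=> /matrixP /(_ 0 0); rewrite [LHS]mxE [RHS]mxE.
move=> /(mulIf (lt0r_neq0 vv_gt0)) zJ.
by rewrite CrealE -zJ.
Qed.

Lemma symmetric_eigenvalue_exists (R : rcfType) n (A : 'M[R]_n) :
  (0 < n)%N -> A^T = A -> exists a, eigenvalue A a.
Proof.
move=> n_gt0 A_sym; pose Ac := map_mx (real_complex R) A.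
have Ac_herm : map_mx Num.conj Ac^T = Ac.
  rewrite map_trmx A_sym -map_mx_comp; apply: eq_map_mx => r /=.
  by apply/CrealP/complex_realP; exists r.
have [z Acz] := eigenvalue_closed Ac n_gt0.
have /complex_realP [a za] := hermitian_eigenvalue_real Ac_herm Acz.
exists a; rewrite -(eigenvalue_map (real_complex R)).
by rewrite za in Acz.
Qed.

Lemma eigenvalue_rootsR (R : rcfType) n (A : 'M[R]_n) a :
  eigenvalue A a = (a \in rootsR (char_poly A)).
Proof.
have charA_neq0 : char_poly A != 0 by rewrite monic_neq0 ?char_poly_monic.
by rewrite eigenvalue_root_char -roots_on_rootsR.
Qed.

Lemma min_eigenvalue_exists (R : rcfType) n (A : 'M[R]_n) :
  (exists a, eigenvalue A a) -> exists l, is_min_eigenvalue A l.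
Proof.
have : sorted <%R (rootsR (char_poly A)) := sorted_roots _ _ _.
move=> + [a]; rewrite eigenvalue_rootsR.
case roots_eq: rootsR => [//|l s] /= path_ls _.
exists l; split=> [|b]; rewrite eigenvalue_rootsR roots_eq ?mem_head //.
rewrite inE => /predU1P [-> // | b_s].
exact/ltW/(allP (order_path_min lt_trans path_ls)).
Qed.

Lemma eigenvalue_sub_scalar (R : fieldType) n (A : 'M[R]_n) c l :
  eigenvalue (A - c%:M) l = eigenvalue A (l + c).
Proof.
apply/eigenvalueP/eigenvalueP => [[v hv nz]|[v hv nz]]; exists v => //.
  by move: hv; rewrite mulmxBr mul_mx_scalar scalerDl => <-; rewrite subrK.
by rewrite mulmxBr mul_mx_scalar hv scalerDl addrK.
Qed.

Lemma min_eigenvalue_sub_scalar (R : rcfType) n (A : 'M[R]_n) c l :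
  is_min_eigenvalue A l -> is_min_eigenvalue (A - c%:M) (l - c).
Proof.
move=> [Al l_min]; split=> [|a]; rewrite eigenvalue_sub_scalar ?subrK //.
by move=> /l_min; rewrite lerBlDr.
Qed.

Section Tridiagonal.
Variables (R : comRingType) (d c : nat -> R).

Definition tridiag (i j : nat) : R :=
  if i == j then d i else if j == i.+1 then c i else if i == j.+1 then c j else 0.

Lemma tridiagC i j : tridiag i j = tridiag j i.
Proof.
rewrite /tridiag; case: (ltngtP i j) => [ij|ji|-> //].
  by rewrite (_ : (i == j.+1) = false) //; lia.
by rewrite (_ : (j == i.+1) = false) //; lia.
Qed.

Lemma tridiag_split (g : nat -> R) i j :
  g i * tridiag i j * g j =
    (if i == j then d i * g i ^+ 2 else 0)
  + (if j == i.+1 then c i * g i * g i.+1 else 0)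
  + (if i == j.+1 then c j * g j * g j.+1 else 0).
Proof.
rewrite /tridiag; case: (ltngtP i j) => [ij|ji|<-].
- have -> : (i == j.+1) = false by lia.
  rewrite !addr0 add0r.
  by case: eqP => [->|_]; [ring | rewrite mulr0 mul0r].
- have -> : (j == i.+1) = false by lia.
  rewrite !add0r.
  by case: eqP => [->|_]; [ring | rewrite mulr0 mul0r].
- by rewrite !(ltn_eqF (ltnSn i)) !addr0; ring.
Qed.

Lemma tridiag_quadratic_form (g : nat -> R) N : g N = 0 ->
  \sum_(0 <= j < N) (\sum_(0 <= i < N) g i * tridiag i j) * g j =
  \sum_(0 <= k < N) (d k * g k ^+ 2 + 2 * c k * g k * g k.+1).
Proof.
move=> gN.
have sum_pred1 (F : nat -> R) i :
    \sum_(0 <= j < N) (if j == i then F j else 0) = if (i < N)%N then F i else 0.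
  by rewrite -big_mkcond big_nat1_eq.
have drop_last (F : nat -> R) :
    \sum_(0 <= k < N) (if (k.+1 < N)%N then F k * g k.+1 else 0) =
    \sum_(0 <= k < N) F k * g k.+1.
  apply: eq_big_nat => k /andP[_ kN]; case: ltnP => // Nk.
  by rewrite (_ : k.+1 = N) ?gN ?mulr0 //; lia.
have diag_part : \sum_(0 <= j < N) \sum_(0 <= i < N)
    (if i == j then d i * g i ^+ 2 else 0) = \sum_(0 <= k < N) d k * g k ^+ 2.
  by apply: eq_big_nat => j /andP[_ jN]; rewrite sum_pred1 jN.
have upper_part : \sum_(0 <= j < N) \sum_(0 <= i < N)
    (if j == i.+1 then c i * g i * g i.+1 else 0) =
    \sum_(0 <= k < N) c k * g k * g k.+1.
  by rewrite exchange_big -drop_last; apply: eq_bigr => i _; rewrite sum_pred1.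
have lower_part : \sum_(0 <= j < N) \sum_(0 <= i < N)
    (if i == j.+1 then c j * g j * g j.+1 else 0) =
    \sum_(0 <= k < N) c k * g k * g k.+1.
  by rewrite -drop_last; apply: eq_bigr => j _; rewrite sum_pred1.
under eq_bigr do rewrite big_distrl /=.
under eq_bigr do under eq_bigr do rewrite tridiag_split.
under eq_bigr do rewrite !big_split /=.
rewrite !big_split /= diag_part upper_part lower_part -!big_split /=.
by apply: eq_bigr => k _; ring.
Qed.

End Tridiagonal.

Section BmatEntries.
Variable R : comRingType.

Definition Bdiag (k : nat) : R := let K := k.+1%:R in 4 * K ^+ 2 - 6 * K + 3.
Definition Boff (k : nat) : R := let K := k.+1%:R in - (K * (2 * K - 1)).

Lemma Bform_sum_of_squares (g : nat -> R) N : g N = 0 ->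
  2 * \sum_(0 <= k < N) (Bdiag k * g k ^+ 2 + 2 * Boff k * g k * g k.+1) =
  \sum_(0 <= k < N) g k ^+ 2 +
  \sum_(0 <= k < N) ((2 * k%:R + 1) * g k - (2 * k%:R + 2) * g k.+1) ^+ 2.
Proof.
move=> gN; apply/eqP; rewrite mulr_sumr -big_split /= -subr_eq0 -sumrB.
rewrite (telescope_sumr_eq (fun k => - (2 * k%:R * g k) ^+ 2)) //.
  by rewrite gN !(mulr0, mul0r) expr0n oppr0 subrr.
by move=> k _; rewrite /Bdiag /Boff -natr1; ring.
Qed.

End BmatEntries.

Lemma recurrence_eq0 (R : idomainType) (a b g : nat -> R) N :
    g N = 0 -> (forall k, (k < N)%N -> a k != 0) ->
    (forall k, (k < N)%N -> a k * g k = b k * g k.+1) ->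
  forall k, (k <= N)%N -> g k = 0.
Proof.
move=> gN a_neq0 rec k kN; rewrite -(subKn kN).
elim: (N - k)%N (leq_subr k N) => [|t IHt] tN; first by rewrite subn0.
have kN' : (N - t.+1 < N)%N by lia.
have := rec _ kN'; rewrite (_ : (N - t.+1).+1 = N - t)%N; last by lia.
rewrite (IHt (ltnW tN)) mulr0 => /eqP; rewrite mulf_eq0 (negbTE (a_neq0 _ kN')).
by move=> /eqP.
Qed.

Section BmatEigenvalues.
Variable R : rcfType.

Lemma BmatE N : Bmat R N = \matrix_(i, j) tridiag (Bdiag R) (Boff R) i j.
Proof. by apply/matrixP => i j; rewrite !mxE. Qed.

Lemma Bmat_sym N : (Bmat R N)^T = Bmat R N.
Proof. by rewrite BmatE; apply/matrixP => i j; rewrite !mxE tridiagC. Qed.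

Lemma Bmat_eigenvalue_gt_half N l : eigenvalue (Bmat R N) l -> 2^-1 < l.
Proof.
move=> /eigenvalueP [x hx x_neq0].
pose g k := if insub k is Some j then x 0 j else 0.
have gN : g N = 0 by rewrite /g insubF ?ltnn.
have gx (j : 'I_N) : x 0 j = g j by rewrite /g valK.
pose G := \sum_(0 <= k < N) g k ^+ 2.
pose H := \sum_(0 <= k < N) ((2 * k%:R + 1) * g k - (2 * k%:R + 2) * g k.+1) ^+ 2.
have quad_form : \sum_(0 <= j < N)
    (\sum_(0 <= i < N) g i * tridiag (Bdiag R) (Boff R) i j) * g j = l * G.
  transitivity (\sum_(j < N) (x *m Bmat R N) 0 j * x 0 j).
    rewrite big_mkord; apply: eq_bigr => j _; rewrite mxE big_mkord gx.
    by congr (_ * _); apply: eq_bigr => i _; rewrite BmatE mxE gx.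
  rewrite hx /G mulr_sumr big_mkord; apply: eq_bigr => j _.
  by rewrite mxE gx mulrA.
have := Bform_sum_of_squares gN.
rewrite -tridiag_quadratic_form // quad_form -/G -/H => form.
have G_ge0 : 0 <= G by apply: sumr_ge0 => k _; exact: sqr_ge0.
have H_gt0 : 0 < H.
  rewrite lt_def sumr_ge0 ?andbT => [|k _]; last exact: sqr_ge0.
  apply: contra_neq x_neq0 => /eqP.
  rewrite psumr_eq0 => [/allP H0|k _]; last exact: sqr_ge0.
  have rec k : (k < N)%N -> (2 * k%:R + 1) * g k = (2 * k%:R + 2) * g k.+1.
    move=> kN; apply/eqP; rewrite -subr_eq0 -sqrf_eq0.
    by apply: H0; rewrite mem_index_iota.
  have coef_neq0 k : (k < N)%N -> 2 * k%:R + 1 != 0 :> R.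
    by move=> _; rewrite -natrM natr1 pnatr_eq0.
  apply/rowP => j; rewrite mxE gx (recurrence_eq0 gN coef_neq0 rec) //.
  exact: ltnW.
nra.
Qed.

End BmatEigenvalues.

Theorem corollary4p2 (R : rcfType) (m : nat) (hm : (0 < m)%N) :
  exists lB lD : R,
    is_min_eigenvalue (Bmat R m) lB /\ is_min_eigenvalue (Dmat R m) lD /\
    lB = 2%:R^-1 + lD /\ 2%:R^-1 < lB.
Proof.
have [lB [Bl Bl_min]] :=
  min_eigenvalue_exists (symmetric_eigenvalue_exists hm (Bmat_sym R m)).
exists lB, (lB - 2^-1); split; first by [].
split; first exact: min_eigenvalue_sub_scalar.
by split; [rewrite addrC subrK | exact: Bmat_eigenvalue_gt_half Bl].
Qed.
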